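(* Let $n\geq 3$ and let $o_1,o_2$ be two non-parallel $\mathcal{O}_n$-directions. Write $o_1=\alpha+\beta\zeta_n$ and $o_2=\gamma+\delta\zeta_n$ with $\alpha,\beta,\gamma,\delta\in\mathbb{Z}[\zeta_n+\bar\zeta_n]$. Let $G_{\{o_1,o_2\}}=\bigcap_{i=1}^2\bigcup_{t\in\mathcal{O}_n}(t+\mathbb{R}o_i)$ be the complete grid and let $M_{\{o_1,o_2\}}=\operatorname{lin}_{\mathbb{Z}[\zeta_n+\bar\zeta_n]}\left(\left\{\frac{1}{\alpha\delta-\beta\gamma}o_1,\frac{1}{\alpha\delta-\beta\gamma}o_2\right\}\right)$. Then $\mathcal{O}_n\subset G_{\{o_1,o_2\}}\subset\mathbb{C}$ and $G_{\{o_1,o_2\}}\subset M_{\{o_1,o_2\}}$.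
   Context: $\zeta_n$ is a primitive $n$th root of unity in $\mathbb{C}\cong\mathbb{R}^2$, $\bar\zeta_n$ its complex conjugate, $\mathcal{O}_n=\mathbb{Z}[\zeta_n]$. An $\mathcal{O}_n$-direction is an element of $\mathcal{O}_n\setminus\{0\}$. Every element of $\mathcal{O}_n$ can be written uniquely as $\varphi+\psi\zeta_n$ with $\varphi,\psi\in\mathbb{Z}[\zeta_n+\bar\zeta_n]$, so $\alpha,\beta,\gamma,\delta$ are uniquely determined, and $\alpha\delta-\beta\gamma\neq0$ since $o_1,o_2$ are non-parallel. $\operatorname{lin}_R(S)$ denotes the set of $R$-linear combinations of elements of $S$. *)

From mathcomp Require Import all_boot all_order all_algebra.
From mathcomp Require Import reals.
From mathcomp.real_closed Require Export complex.
Set Implicit Arguments. Unset Strict Implicit. Unset Printing Implicit Defensive.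
Import Order.TTheory GRing.Theory Num.Theory.
Local Open Scope ring_scope.

Section Defs.
Variable R : realType.
Local Notation C := R[i].

Definition intpoly_at (x z : C) : Prop :=
  exists p : {poly int}, z = (map_poly (fun k : int => k%:~R) p).[x].

(* O_n = Z[zeta] *)
Definition On (zeta : C) : C -> Prop := intpoly_at zeta.

Definition Zreal (zeta : C) : C -> Prop := intpoly_at (zeta + (zeta^*)%C).

Definition On_direction (zeta o : C) : Prop := On zeta o /\ o <> 0.

Definition parallel (o1 o2 : C) : Prop := exists r : R, o1 = (r%:C)%C * o2.

Definition grid (zeta o1 o2 : C) : C -> Prop :=
  fun z => (exists t, On zeta t /\ exists r : R, z = t + (r%:C)%C * o1) /\
           (exists t, On zeta t /\ exists r : R, z = t + (r%:C)%C * o2).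

Definition Mlat (zeta o1 o2 d : C) : C -> Prop :=
  fun z => exists a b, Zreal zeta a /\ Zreal zeta b /\
             z = a * (d^-1 * o1) + b * (d^-1 * o2).
End Defs.

(** Since [|zeta| = 1], [zeta^2 = s zeta - 1] with [s = zeta + zeta^*] real, so
    every element of [O_n] is [a + b zeta] with [a, b] in [Z[s]]; for [n >= 3]
    [zeta] is not real, so these coordinates are unique.  A grid point is
    [z = t1 + r1 o1 = t2 + r2 o2]; writing [t2 - t1 = a + b zeta] and comparing
    coordinates gives [a = r1 alpha - r2 gamma] and [b = r1 beta - r2 delta], so
    [r1 = (a delta - b gamma) / D] with [D = alpha delta - beta gamma], which is
    nonzero by non-parallelism.  Writing [t1] in the basis [o1, o2] by Cramer's
    rule then puts [z] in [M]. *)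
From mathcomp Require Import all_boot all_order all_algebra.
From mathcomp Require Import reals.
From mathcomp.real_closed Require Import complex.
From mathcomp Require Import ring.
Set Implicit Arguments.
Unset Strict Implicit.
Unset Printing Implicit Defensive.
Import Order.TTheory GRing.Theory Num.Theory.
Local Open Scope ring_scope.

Section IntPoly.
Variable R : realType.
Implicit Types x y z : R[i].

Lemma intpoly_at_int x (k : int) : intpoly_at x k%:~R.
Proof. by exists k%:P; rewrite map_polyC hornerC. Qed.

Lemma intpoly_atX x : intpoly_at x x.
Proof. by exists 'X; rewrite map_polyX hornerX. Qed.

Lemma intpoly_atD x y z : intpoly_at x y -> intpoly_at x z -> intpoly_at x (y + z).
Proof. by move=> [p ->] [q ->]; exists (p + q); rewrite rmorphD hornerD. Qed.

Lemma intpoly_atB x y z : intpoly_at x y -> intpoly_at x z -> intpoly_at x (y - z).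
Proof. by move=> [p ->] [q ->]; exists (p - q); rewrite rmorphB hornerD hornerN. Qed.

Lemma intpoly_atM x y z : intpoly_at x y -> intpoly_at x z -> intpoly_at x (y * z).
Proof. by move=> [p ->] [q ->]; exists (p * q); rewrite rmorphM hornerM. Qed.

Lemma intpoly_at_real x z : x \is Num.real -> intpoly_at x z -> z \is Num.real.
Proof.
move=> xR [p ->]; apply: rpred_horner xR.
by apply/polyOverP => i; rewrite coef_map rpred_int.
Qed.

Lemma real_complex_real (r : R) : (r%:C)%C \is Num.real.
Proof. by apply/complex_realP; exists r. Qed.

Lemma Zreal_real (zeta a : R[i]) : Zreal zeta a -> a \is Num.real.
Proof. by apply: intpoly_at_real; rewrite addcJ rpredM ?rpred_nat ?real_complex_real. Qed.

End IntPoly.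

Lemma prim_root_mulJ (R : realType) n (zeta : R[i]) :
  (0 < n)%N -> n.-primitive_root zeta -> zeta * (zeta^*)%C = 1.
Proof.
move=> n_gt0 zeta_prim; apply/eqP.
rewrite -(pexpr_eq1 n_gt0 (mulcJ_ge0 zeta)) exprMn -rmorphXn.
by rewrite (prim_expr_order zeta_prim) rmorph1 mulr1.
Qed.

Lemma prim_root_Nreal (R : realType) n (zeta : R[i]) :
  (2 < n)%N -> n.-primitive_root zeta -> zeta \isn't Num.real.
Proof.
move=> n_gt2 zeta_prim; apply/negP => /complex_realP[k zeta_eq].
have zetaJ : (zeta^*)%C = zeta by rewrite zeta_eq conjc_real.
have : zeta ^+ 2 == 1.
  by rewrite expr2 -{2}zetaJ (prim_root_mulJ _ zeta_prim) ?(ltn_trans _ n_gt2).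
rewrite -(prim_order_dvd zeta_prim) => /(dvdn_leq (isT : (0 < 2)%N)).
by rewrite leqNgt n_gt2.
Qed.

Lemma det_eq0_parallel (R : realType) (zeta alpha beta gamma delta : R[i]) :
  alpha \is Num.real -> beta \is Num.real ->
  gamma \is Num.real -> delta \is Num.real ->
  gamma + delta * zeta != 0 -> alpha * delta - beta * gamma = 0 ->
  parallel (alpha + beta * zeta) (gamma + delta * zeta).
Proof.
move=> aR bR gR dR o2_neq0 /subr0_eq det0.
have [g0|g_neq0] := eqVneq gamma 0.
  have d_neq0 : delta != 0.
    by apply: contraNneq o2_neq0 => d0; rewrite g0 d0 mul0r addr0.
  have /complex_realP[r r_eq] : beta / delta \is Num.real by rewrite rpredM ?rpredV.
  have -> : alpha = 0 by apply/eqP; rewrite -(mulIr_eq0 _ (mulIf d_neq0)) det0 g0 mulr0.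
  by exists r; rewrite -r_eq g0; field.
have /complex_realP[r r_eq] : alpha / gamma \is Num.real by rewrite rpredM ?rpredV.
have -> : beta = alpha * delta / gamma by rewrite det0 mulfK.
by exists r; rewrite -r_eq; field.
Qed.

Lemma On_sub_grid (R : realType) (zeta o1 o2 z : R[i]) :
  On zeta z -> grid zeta o1 o2 z.
Proof.
by move=> Oz; split; exists z; split=> //; exists 0; rewrite rmorph0 mul0r addr0.
Qed.

Section UnitRoot.
Variables (R : realType) (zeta : R[i]).
Hypothesis zetaJ : zeta * (zeta^*)%C = 1.
Hypothesis zeta_Nreal : zeta \isn't Num.real.

Lemma On_decomp z : On zeta z ->
  exists a b, [/\ Zreal zeta a, Zreal zeta b & z = a + b * zeta].
Proof.
case=> p ->; elim/poly_ind: p => [|p c [a [b [Za Zb p_eq]]]].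
  exists 0, 0; split; rewrite ?rmorph0 ?horner0 ?mul0r ?addr0 //;
  exact: (intpoly_at_int _ 0).
rewrite rmorphD rmorphM /= map_polyX map_polyC hornerMXaddC p_eq.
exists (c%:~R - b), (a + b * (zeta + (zeta^*)%C)); split.
- by apply: intpoly_atB => //; apply: intpoly_at_int.
- by apply: intpoly_atD => //; apply: intpoly_atM => //; apply: intpoly_atX.
- have zeta_sq : zeta * zeta = (zeta + (zeta^*)%C) * zeta - 1 by rewrite -zetaJ; ring.
  have -> : (a + b * zeta) * zeta = a * zeta + b * (zeta * zeta) by ring.
  by rewrite zeta_sq; ring.
Qed.

Lemma real_coord_inj a b a' b' :
  a \is Num.real -> b \is Num.real -> a' \is Num.real -> b' \is Num.real ->
  a + b * zeta = a' + b' * zeta -> a = a' /\ b = b'.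
Proof.
move=> aR bR a'R b'R eq_ab.
have b_eq : b = b'.
  apply/eqP; rewrite -subr_eq0; apply: contraNT zeta_Nreal => b_neq0.
  have ab_eq : (b - b') * zeta = a' - a by rewrite -[a'](addrK (b' * zeta)) -eq_ab; ring.
  have -> : zeta = (a' - a) / (b - b') by rewrite -ab_eq mulrC mulKf.
  by rewrite rpredM ?rpredV ?rpredB.
by split=> //; move/eqP: eq_ab; rewrite b_eq (inj_eq (addIr _)) => /eqP.
Qed.

Lemma grid_sub_Mlat alpha beta gamma delta z :
  Zreal zeta alpha -> Zreal zeta beta -> Zreal zeta gamma -> Zreal zeta delta ->
  alpha * delta - beta * gamma != 0 ->
  grid zeta (alpha + beta * zeta) (gamma + delta * zeta) z ->
  Mlat zeta (alpha + beta * zeta) (gamma + delta * zeta) (alpha * delta - beta * gamma) z.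
Proof.
move=> Za Zb Zg Zd det_neq0 [[t1 [Ot1 [r1 z_eq1]]] [t2 [Ot2 [r2 z_eq2]]]].
have [a [b [Za' Zb' t_eq]]] := On_decomp (intpoly_atB Ot2 Ot1).
have [e [f [Ze Zf t1_eq]]] := On_decomp Ot1.
have t_coord : a + b * zeta = (r1%:C%C * alpha - r2%:C%C * gamma)
                             + (r1%:C%C * beta - r2%:C%C * delta) * zeta.
  by rewrite -t_eq -[t2](addrK (r2%:C%C * (gamma + delta * zeta))) -z_eq2 z_eq1; ring.
have [a_eq b_eq] : a = r1%:C%C * alpha - r2%:C%C * gamma /\
                   b = r1%:C%C * beta - r2%:C%C * delta.
  by apply: real_coord_inj t_coord; rewrite ?rpredB ?rpredM ?real_complex_real //;
    apply: (@Zreal_real _ zeta).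
exists ((e * delta - f * gamma) + (a * delta - b * gamma)), (f * alpha - e * beta).
split; [|split].
- by apply: intpoly_atD; apply: intpoly_atB; apply: intpoly_atM.
- by apply: intpoly_atB; apply: intpoly_atM.
- by rewrite z_eq1 t1_eq a_eq b_eq; field.
Qed.

End UnitRoot.

Theorem proposition5p2 (R : realType) (n : nat) (zeta : R[i])
  (o1 o2 alpha beta gamma delta : R[i]) :
  (3 <= n)%N -> n.-primitive_root zeta ->
  On_direction zeta o1 -> On_direction zeta o2 -> ~ parallel o1 o2 ->
  Zreal zeta alpha -> Zreal zeta beta -> Zreal zeta gamma -> Zreal zeta delta ->
  o1 = alpha + beta * zeta -> o2 = gamma + delta * zeta ->
  (forall z, On zeta z -> grid zeta o1 o2 z) /\
  (forall z, grid zeta o1 o2 z -> Mlat zeta o1 o2 (alpha * delta - beta * gamma) z).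
Proof.
move=> n_ge3 zeta_prim _ [_ o2_neq0] o12_npar Za Zb Zg Zd o1_eq o2_eq.
have zetaJ := prim_root_mulJ (ltnW (ltnW n_ge3)) zeta_prim.
have zeta_Nreal := prim_root_Nreal n_ge3 zeta_prim.
have det_neq0 : alpha * delta - beta * gamma != 0.
  apply/eqP => det0; apply: o12_npar; rewrite o1_eq o2_eq.
  apply: (det_eq0_parallel (Zreal_real Za) (Zreal_real Zb) (Zreal_real Zg)
                           (Zreal_real Zd) _ det0).
  by rewrite -o2_eq; apply/eqP.
split=> z; first exact: On_sub_grid.
rewrite o1_eq o2_eq => grid_z.
exact: (grid_sub_Mlat zetaJ zeta_Nreal Za Zb Zg Zd det_neq0 grid_z).
Qed.
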